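(* For every finite abelian group $F$, the real linear span of the image of the correlation map satisfies \[\mathrm{span}_{\mathbb R}\big(A_F(G_F)\big)=\mathbb R^F_{\rm ev}:=\{h\in\mathbb R^F\mid h_{-f}=h_f\ \text{for all } f\in F\}.\]
   Context: Let $F$ be a finite abelian group, written additively, and $G_F=\{-1,1\}^F$. The correlation map $A_F:G_F\to\mathbb Z^F\subseteq\mathbb R^F$ is $A_F(\sigma)_f=\sum_{\ell\in F}\sigma_\ell\sigma_{\ell+f}$. *)

From HB Require Import structures.
From mathcomp Require Import all_boot all_order all_algebra.
From mathcomp Require Import reals.
Set Implicit Arguments. Unset Strict Implicit. Unset Printing Implicit Defensive.
Import Order.TTheory GRing.Theory Num.Theory.
Local Open Scope ring_scope.

(* An element of G_F = {-1,1}^F is encoded by s : {ffun F -> bool},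
   via spin s l = 1 if s l, -1 otherwise (a bijection bool <-> {-1,1}). *)
Definition spin (R : nzRingType) (F : finType) (s : {ffun F -> bool}) (l : F) : R :=
  if s l then 1 else -1.

Definition corr (R : nzRingType) (F : finZmodType) (s : {ffun F -> bool}) : {ffun F -> R^o} :=
  [ffun f => \sum_(l : F) spin R s l * spin R s (l + f)].

Definition corr_image (R : nzRingType) (F : finZmodType) : seq {ffun F -> R^o} :=
  [seq corr R s | s : {ffun F -> bool}].

Definition is_even_fun (R : nzRingType) (F : finZmodType) (h : {ffun F -> R^o}) : Prop :=
  forall f : F, h (- f) = h f.

From HB Require Import structures.
From mathcomp Require Import all_boot all_order all_algebra.
From mathcomp Require Import reals ring.
Import Order.TTheory GRing.Theory Num.Theory.
Local Open Scope ring_scope.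

(* Each correlation vector is even, which gives one inclusion. For the other,
   take the configuration that is -1 exactly on a set S: its correlation is
   (|F| - 4|S|) 1 + 4 G_S, where G_S f = #{l in S | l + f in S}. Hence the
   span contains 1 (S empty), every G_S, and so G_{0,D} - 2 G_{0} = e_D + e_{-D};
   these span the even functions. *)

Lemma corr_even (R : comNzRingType) (F : finZmodType) (s : {ffun F -> bool}) :
  is_even_fun (corr R s).
Proof.
move=> f; rewrite !ffunE (reindex_inj (addIr f)) /=.
by apply: eq_bigr => l _; rewrite addrK mulrC.
Qed.

Lemma span_corr_even (R : fieldType) (F : finZmodType) (h : {ffun F -> R^o}) :
  h \in <<corr_image R F>>%VS -> is_even_fun h.
Proof.
move=> h_span; rewrite (coord_span (X := in_tuple (corr_image R F)) h_span) => f.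
rewrite !sum_ffunE; apply: eq_bigr => i _.
rewrite !ffunE; congr (_ * _).
by case/mapP: (mem_nth 0 (ltn_ord i)) => s _ ->; apply: corr_even.
Qed.

Section EvenInSpan.

Variables (R : numFieldType) (F : finZmodType).

Definition flipped_on (S : {set F}) : {ffun F -> bool} := [ffun l => l \notin S].

Definition const1 : {ffun F -> R^o} := [ffun _ => 1].

Definition autocorr (S : {set F}) : {ffun F -> R^o} :=
  [ffun f => \sum_l (l \in S)%:R * (l + f \in S)%:R].

Definition pair_delta (d : F) : {ffun F -> R^o} :=
  [ffun g => (g == d)%:R + (g == - d)%:R].

Local Notation W := <<corr_image R F>>%VS.

Lemma sum_indicator (S : {set F}) : \sum_l ((l \in S)%:R : R) = #|S|%:R.
Proof.
by rewrite -[RHS](sumr_const (mem S)) [RHS]big_mkcond; apply: eq_bigr => l _; case: (l \in S). Qed.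

Lemma flipped_onE (S : {set F}) l : spin R (flipped_on S) l = 1 - 2 * (l \in S)%:R.
Proof. by rewrite /spin ffunE; case: (l \in S); rewrite /= ?mulr0 ?subr0 // mulr1 -opprB addrK. Qed.

Lemma corr_flipped_on (S : {set F}) :
  corr R (flipped_on S) = (#|F|%:R - 4 * #|S|%:R) *: const1 + 4 *: autocorr S.
Proof.
apply/ffunP => f; rewrite !ffunE.
under eq_bigr do rewrite !flipped_onE.
have expand l : (1 - 2 * (l \in S)%:R) * (1 - 2 * (l + f \in S)%:R) =
   1 - 2 * (l \in S)%:R - 2 * (l + f \in S)%:R
     + 4 * ((l \in S)%:R * (l + f \in S)%:R) :> R by ring.
under eq_bigr do rewrite expand.
rewrite !big_split /= !sumrN -!mulr_sumr sum_indicator.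
rewrite [X in _ - (_ * X) + _](reindex_inj (addIr (- f))) /=.
under [X in _ - (_ * X) + _]eq_bigr do rewrite subrK.
rewrite sum_indicator sumr_const /GRing.scale /=.
by rewrite (_ : #|xpredT| = #|F|) //; ring.
Qed.

Lemma corr_in_span s : corr R s \in W.
Proof. by apply/memv_span/map_f; rewrite mem_enum. Qed.

Lemma const1_in_span : const1 \in W.
Proof.
have := corr_in_span (flipped_on set0); rewrite corr_flipped_on cards0 mulr0 subr0.
have -> : autocorr set0 = 0.
  by apply/ffunP => f; rewrite !ffunE big1 // => l _; rewrite in_set0 mul0r.
rewrite scaler0 addr0 => /(memvZ #|F|%:R^-1); rewrite scalerA mulVf ?scale1r //.
by rewrite pnatr_eq0 -lt0n; apply/card_gt0P; exists 0.
Qed.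

Lemma autocorr_in_span S : autocorr S \in W.
Proof.
have -> : autocorr S =
    4^-1 *: (corr R (flipped_on S) - (#|F|%:R - 4 * #|S|%:R) *: const1).
  by rewrite corr_flipped_on addrC addKr scalerA mulVf ?scale1r // pnatr_eq0.
by rewrite memvZ // memvB // ?memvZ ?corr_in_span ?const1_in_span.
Qed.

Lemma autocorr_set1_0 : autocorr [set 0] = [ffun g => (g == 0)%:R].
Proof.
apply/ffunP => f; rewrite !ffunE (bigD1 0) //= big1 ?addr0.
  by rewrite !in_set1 add0r eqxx mul1r.
by move=> l nl; rewrite in_set1 (negbTE nl) mul0r.
Qed.

Lemma autocorr_set2_0 d : d != 0 ->
  autocorr [set 0; d] = pair_delta d + 2 *: [ffun g => (g == 0)%:R].
Proof.
move=> nd; apply/ffunP => g; rewrite !ffunE /GRing.scale /=.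
rewrite (bigD1 0) //= (bigD1 d) /=; last by rewrite nd.
rewrite big1 ?addr0; last first.
  by move=> l /andP[l0 ld]; rewrite !in_set2 (negbTE l0) (negbTE ld) mul0r.
have dg_d : (d + g == d) = (g == 0) by rewrite -subr_eq0 [d + g]addrC addrK.
have dg_0 : (d + g == 0) = (g == - d) by rewrite addr_eq0 eq_sym eqr_oppLR.
rewrite !in_set2 !eqxx /= orbT dg_d dg_0 add0r !mul1r.
have nd' : - d != 0 by rewrite oppr_eq0.
have [->|g0] := eqVneq g 0.
  by rewrite eq_sym (negbTE nd) eq_sym (negbTE nd') /=; ring.
by rewrite orbF; have [->|gd] := eqVneq g d; rewrite /=; ring.
Qed.

Lemma pair_delta_in_span d : pair_delta d \in W.
Proof.
have [->|nd] := eqVneq d 0.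
  have -> : pair_delta 0 = 2 *: autocorr [set 0].
    by rewrite autocorr_set1_0; apply/ffunP => g; rewrite !ffunE oppr0 /GRing.scale /=; ring.
  by rewrite memvZ // autocorr_in_span.
have -> : pair_delta d = autocorr [set 0; d] - 2 *: autocorr [set 0].
  by rewrite autocorr_set2_0 // autocorr_set1_0 addrK.
by rewrite memvB // ?memvZ // autocorr_in_span.
Qed.

Lemma even_fun_pair_delta_sum (h : {ffun F -> R^o}) : is_even_fun h ->
  h = \sum_f (h f / 2) *: pair_delta f.
Proof.
move=> h_even; apply/ffunP => g; rewrite sum_ffunE.
under eq_bigr do rewrite !ffunE /GRing.scale /= mulrDr.
rewrite big_split /= (bigD1 g) //= big1 ?addr0; last first.
  by move=> f fg; rewrite eq_sym (negbTE fg) mulr0.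
rewrite (bigD1 (- g)) //= big1 ?addr0; last first.
  by move=> f fg; rewrite eq_sym eqr_oppLR (negbTE fg) mulr0.
by rewrite eqxx opprK eqxx h_even !mulr1 -splitr.
Qed.

Lemma even_fun_in_span (h : {ffun F -> R^o}) : is_even_fun h -> h \in W.
Proof.
move=> /even_fun_pair_delta_sum ->.
by apply: memv_suml => f _; rewrite memvZ // pair_delta_in_span.
Qed.

End EvenInSpan.

Theorem mainTheorem3 (R : realType) (F : finZmodType) (h : {ffun F -> R^o}) :
  (h \in <<corr_image R F>>%VS) <-> is_even_fun h.
Proof. by split; [apply: span_corr_even | apply: even_fun_in_span]. Qed.
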